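(* Let $I_n:=\iint_T \frac{(-\ln xy)^n}{xy}\,dx\,dy$. The series $\sum_{n=0}^\infty(-1)^n\frac{I_n}{n!}$ diverges, but it is Abel summable to $1/2$, i.e. $\lim_{t\to1^-}\sum_{n=0}^\infty(-1)^n\frac{I_n}{n!}t^n=\frac12$.
   Context: $T:=\{(x,y)\in[0,1]^2 : x+y\ge 1\}$. *)

From Stdlib Require Import Reals.
Open Scope R_scope.

Definition integrand (n : nat) (x y : R) : R := (- ln (x * y)) ^ n / (x * y).

Definition improper_int (g : R -> R) (a b L : R) : Prop :=
  (forall c d, a < c -> c <= d -> d < b -> inhabited (Riemann_integrable g c d)) /\
  (forall eps, 0 < eps -> exists delta, 0 < delta /\
     forall c d (pr : Riemann_integrable g c d),
       a < c -> c < a + delta -> c <= d -> b - delta < d -> d < b ->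
       Rabs (RiemannInt pr - L) < eps).

(* T = {(x,y) in [0,1]^2 : x + y >= 1}.  I_n = iint_T integrand n, written as the
   iterated integral  int_0^1 ( int_{1-x}^1 integrand n x y dy ) dx
   (the integrand is nonnegative on T, so this equals the double integral). *)
Definition is_I (n : nat) (L : R) : Prop :=
  exists g : R -> R,
    (forall x, 0 < x < 1 ->
       exists pr : Riemann_integrable (fun y => integrand n x y) (1 - x) 1,
         RiemannInt pr = g x) /\
    improper_int g 0 1 L.

From Stdlib Require Import Reals Lra Lia Classical Factorial.
From Coquelicot Require Import Coquelicot.
Open Scope R_scope.

(* Write A = -ln x, B = -ln (1 - x). The inner integral over {x} x [1-x, 1] is
   ((A+B)^(n+1) - A^(n+1)) / ((n+1) x), and summing these against s^n/n! gives the closed form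
   G_s(x) = (e^(s(A+B)) - e^(sA)) / (s x) (slice_gf below). For 0 < s < 1,
   G_s(x) <= (4/s)(x^-s + (1-x)^-s), whose integral is at most 8/(s(1-s)); hence
   I_n <= n! s^-n 8/(s(1-s)), and the Abel series converges for t < s. Its partial sums are integrals of partial sums of G_(-t), within a geometric error
   (t/s)^(N+1) 8/(s(1-s)) of the integral of G_(-t), and 1 - (1-x)^t <= G_(-t)(x) <= x^t/t, so the
   Abel sum lies between t/(t+1) and 1/(t(t+1)), both tending to 1/2.
   Divergence: the inner integral dominates A^n, and the integral of A^n over (c, 3/4) is
   n! (E(3/4) - E(c)) with E(x) = x sum_(k<=n) A^k/k!, where E(3/4) >= 3/4 and E(c) <= 1/4 for
   small c; so I_n >= n!/2 and the terms of the series do not tend to 0. *)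

(** * Limits at both ends of (0, 1) *)

Definition near01 (P : R -> R -> Prop) : Prop :=
  exists delta, 0 < delta /\
    forall c d, 0 < c -> c < delta -> c <= d -> 1 - delta < d -> d < 1 -> P c d.

Definition lim01 (F : R -> R -> R) (L : R) : Prop :=
  forall eps, 0 < eps -> near01 (fun c d => Rabs (F c d - L) < eps).

Lemma near01_everywhere (P : R -> R -> Prop) :
  (forall c d, 0 < c -> c <= d -> d < 1 -> P c d) -> near01 P.
Proof. intros HP. exists 1. split; [lra|]. intros; apply HP; lra. Qed.

Lemma near01_impl (P Q : R -> R -> Prop) :
  near01 P -> (forall c d, 0 < c -> c <= d -> d < 1 -> P c d -> Q c d) -> near01 Q.
Proof.
  intros [delta [Hdelta HP]] HPQ. exists delta. split; [exact Hdelta|].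
  intros c d Hc Hc' Hcd Hd Hd'. apply HPQ; auto.
Qed.

Lemma near01_and (P Q : R -> R -> Prop) :
  near01 P -> near01 Q -> near01 (fun c d => P c d /\ Q c d).
Proof.
  intros [d1 [Hd1 HP]] [d2 [Hd2 HQ]].
  exists (Rmin d1 d2). split; [now apply Rmin_pos|].
  intros c d Hc Hc' Hcd Hd Hd'. pose proof (Rmin_l d1 d2). pose proof (Rmin_r d1 d2).
  split; [apply HP | apply HQ]; auto; lra.
Qed.

Lemma near01_witness (P : R -> R -> Prop) : near01 P -> exists c d, P c d.
Proof.
  intros [delta [Hdelta HP]]. set (r := Rmin delta 1 / 2).
  pose proof (Rmin_l delta 1). pose proof (Rmin_r delta 1).
  assert (0 < Rmin delta 1) by (apply Rmin_pos; lra).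
  exists r, (1 - r). apply HP; unfold r; lra.
Qed.

Lemma lim01_const (k : R) : lim01 (fun _ _ => k) k.
Proof.
  intros eps Heps. exists 1. split; [lra|].
  intros. rewrite Rminus_diag, Rabs_R0. exact Heps.
Qed.

Lemma lim01_sub_gap (k : R) : lim01 (fun c d => k - (c + (1 - d))) k.
Proof.
  intros eps Heps. exists (eps / 2). split; [lra|].
  intros c d Hc Hc' Hcd Hd Hd'.
  replace (k - (c + (1 - d)) - k) with (- (c + (1 - d))) by ring.
  rewrite Rabs_Ropp, Rabs_right; lra.
Qed.

Lemma lim01_ext (F G : R -> R -> R) (L : R) :
  (forall c d, 0 < c -> c <= d -> d < 1 -> F c d = G c d) -> lim01 F L -> lim01 G L.
Proof.
  intros HFG HF eps Heps. apply (near01_impl _ _ (HF eps Heps)).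
  intros c d Hc Hcd Hd. rewrite HFG by assumption. auto.
Qed.

Lemma lim01_plus (F G : R -> R -> R) (L1 L2 : R) :
  lim01 F L1 -> lim01 G L2 -> lim01 (fun c d => F c d + G c d) (L1 + L2).
Proof.
  intros HF HG eps Heps.
  apply (near01_impl _ _ (near01_and _ _ (HF (eps / 2) ltac:(lra)) (HG (eps / 2) ltac:(lra)))).
  intros c d _ _ _ [H1 H2].
  replace (F c d + G c d - (L1 + L2)) with ((F c d - L1) + (G c d - L2)) by ring.
  eapply Rle_lt_trans; [apply Rabs_triang|]. lra.
Qed.

Lemma lim01_scal (F : R -> R -> R) (L k : R) :
  lim01 F L -> lim01 (fun c d => k * F c d) (k * L).
Proof.
  intros HF eps Heps.
  assert (Hk : 0 < Rabs k + 1) by (pose proof (Rabs_pos k); lra).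
  apply (near01_impl _ _ (HF (eps / (Rabs k + 1)) ltac:(apply Rdiv_lt_0_compat; lra))).
  intros c d _ _ _ H.
  replace (k * F c d - k * L) with (k * (F c d - L)) by ring. rewrite Rabs_mult.
  apply Rle_lt_trans with ((Rabs k + 1) * Rabs (F c d - L)).
  - pose proof (Rabs_pos (F c d - L)). nra.
  - apply Rmult_lt_reg_l with (/ (Rabs k + 1)); [now apply Rinv_0_lt_compat|].
    rewrite <- Rmult_assoc, Rinv_l, Rmult_1_l by lra. rewrite Rmult_comm. exact H.
Qed.

Lemma lim01_le (F G : R -> R -> R) (L1 L2 : R) :
  lim01 F L1 -> lim01 G L2 -> near01 (fun c d => F c d <= G c d) -> L1 <= L2.
Proof.
  intros HF HG HFG. destruct (Rle_or_lt L1 L2) as [|Hlt]; [assumption|]. exfalso.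
  set (e := (L1 - L2) / 2).
  destruct (near01_witness _ (near01_and _ _ HFG
    (near01_and _ _ (HF e ltac:(unfold e; lra)) (HG e ltac:(unfold e; lra)))))
    as [c [d [H [H1 H2]]]].
  apply Rabs_def2 in H1. apply Rabs_def2 in H2. unfold e in *. lra.
Qed.

Lemma Un_cv_const (k : R) : Un_cv (fun _ => k) k.
Proof. intros eps Heps. exists 0%nat. intros. rewrite R_dist_eq. exact Heps. Qed.

Lemma Un_cv_dist_le (U : nat -> R) (l a b : R) (N : nat) :
  Un_cv U l -> (forall n, (n >= N)%nat -> Rabs (U n - a) <= b) -> Rabs (l - a) <= b.
Proof.
  intros HU Hb. apply Rnot_lt_le. intros Hlt.
  destruct (HU (Rabs (l - a) - b)) as [N1 HN1]; [lra|].
  specialize (HN1 (Nat.max N N1) ltac:(lia)). specialize (Hb (Nat.max N N1) ltac:(lia)).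
  unfold Rdist in HN1. rewrite Rabs_minus_sym in HN1.
  pose proof (Rabs_triang (l - U (Nat.max N N1)) (U (Nat.max N N1) - a)).
  replace (l - U (Nat.max N N1) + (U (Nat.max N N1) - a)) with (l - a) in H by ring. lra.
Qed.

Lemma Un_cv_pow_scal q K : 0 <= q < 1 -> Un_cv (fun N => q ^ S N * K) 0.
Proof.
  intros Hq.
  assert (Hpow : Un_cv (fun N => q ^ S N) 0).
  { intros eps Heps. destruct (pow_lt_1_zero q ltac:(rewrite Rabs_right; lra) eps Heps) as [N HN].
    exists N. intros n Hn. unfold Rdist. rewrite Rminus_0_r. apply HN. lia. }
  pose proof (CV_mult _ _ _ _ Hpow (Un_cv_const K)) as H. rewrite Rmult_0_l in H. exact H.
Qed.

Lemma Un_cv_between (P e : nat -> R) l a b :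
  Un_cv P l -> Un_cv e 0 -> (forall N, a - e N <= P N <= b + e N) -> a <= l <= b.
Proof.
  intros HP He Hb. split.
  - pose proof (@Rle_cv_lim (fun _ => a) (fun N => P N + e N) a (l + 0)) as H.
    assert (a <= l + 0); [|lra].
    apply H; [intros N; specialize (Hb N); lra | apply Un_cv_const | now apply CV_plus].
  - pose proof (@Rle_cv_lim P (fun N => b + e N) l (b + 0)) as H.
    assert (l <= b + 0); [|lra].
    apply H; [intros N; specialize (Hb N); lra | exact HP | apply CV_plus; auto using Un_cv_const].
Qed.

Lemma Un_cv_exp_sub (u v : R) :
  Un_cv (fun N => sum_f_R0 (fun m => (u ^ m - v ^ m) / INR (fact m)) N) (exp u - exp v).
Proof.
  pose proof (proj2_sig (exist_exp u)) as Hu. pose proof (proj2_sig (exist_exp v)) as Hv.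
  unfold exp_in, infinite_sum in Hu, Hv. fold (exp u) in Hu. fold (exp v) in Hv.
  eapply Un_cv_ext; [|exact (CV_minus _ _ _ _ Hu Hv)].
  intros N. cbv beta. rewrite <- minus_sum. apply sum_eq. intros. unfold Rdiv. ring.
Qed.

Lemma sum_alt_tail_le (a : nat -> R) t s M k : (forall n, 0 <= a n) -> 0 <= t <= s -> 0 < s ->
  Rabs (sum_f_R0 (fun n => (- t) ^ n * a n) (M + k) - sum_f_R0 (fun n => (- t) ^ n * a n) M)
  <= (t / s) ^ S M * (sum_f_R0 (fun n => s ^ n * a n) (M + k) - sum_f_R0 (fun n => s ^ n * a n) M).
Proof.
  intros Ha Ht Hs. induction k as [|k IH].
  - rewrite Nat.add_0_r, !Rminus_diag, Rabs_R0, Rmult_0_r. lra.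
  - rewrite Nat.add_succ_r, !tech5.
    set (m := S (M + k)).
    assert (Hpow : t ^ m <= (t / s) ^ S M * s ^ m).
    { replace t with (t / s * s) at 1 by (field; lra). rewrite Rpow_mult_distr.
      apply Rmult_le_compat_r; [apply pow_le; lra|].
      assert (0 <= t / s <= 1).
      { split; [apply Rdiv_le_0_compat; lra|].
        apply Rmult_le_reg_r with s; [lra|]. unfold Rdiv. rewrite Rmult_assoc, Rinv_l; lra. }
      unfold m. replace (S (M + k)) with (S M + k)%nat by lia. rewrite pow_add.
      pose proof (pow_le (t / s) (S M) ltac:(lra)).
      assert ((t / s) ^ k <= 1) by (rewrite <- (pow1 k); apply pow_incr; lra). nra. }
    assert (Habs : Rabs ((- t) ^ m * a m) = t ^ m * a m).
    { rewrite Rabs_mult, <- RPow_abs, Rabs_Ropp, (Rabs_right t), (Rabs_right (a m)); auto;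
        apply Rle_ge; auto; lra. }
    pose proof (Rmult_le_compat_r _ _ _ (Ha m) Hpow).
    match goal with |- Rabs (?u + ?v - ?w) <= _ =>
      replace (u + v - w) with ((u - w) + v) by ring end.
    eapply Rle_trans; [apply Rabs_triang|]. rewrite Habs. lra.
Qed.

Lemma pow_S_plus_ge a b n : 0 <= a -> 0 <= b ->
  a ^ S n + INR (S n) * a ^ n * b <= (a + b) ^ S n.
Proof.
  intros Ha Hb. induction n as [|n IH]; [simpl; lra|].
  rewrite S_INR.
  change ((a + b) ^ S (S n)) with ((a + b) * (a + b) ^ S n).
  change (a ^ S (S n)) with (a * (a * a ^ n)).
  change (a ^ S n) with (a * a ^ n) in IH |- *.
  set (p := a ^ n) in *. set (k := INR (S n)) in *. set (w := (a + b) ^ S n) in *.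
  assert (Hp : 0 <= p) by (apply pow_le; auto).
  assert (Hk : 0 <= k) by apply pos_INR.
  assert ((a + b) * (a * p + k * p * b) <= (a + b) * w) by (apply Rmult_le_compat_l; lra).
  assert (0 <= k * p * b * b) by (repeat apply Rmult_le_pos; auto).
  assert (0 <= a * p * b) by (repeat apply Rmult_le_pos; auto).
  nra.
Qed.

Lemma exp_le_compat u v : u <= v -> exp u <= exp v.
Proof. intros [Huv | ->]; [left; apply exp_increasing, Huv | lra]. Qed.

Lemma exp_le_1 u : u <= 0 -> exp u <= 1.
Proof. intros Hu. rewrite <- exp_0. apply exp_le_compat, Hu. Qed.

Lemma exp_mul_ln_succ t y : 0 < y -> exp ((t + 1) * ln y) = exp (t * ln y) * y.
Proof.
  intros Hy. replace ((t + 1) * ln y) with (t * ln y + ln y) by ring.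
  rewrite exp_plus, exp_ln; auto.
Qed.

Lemma ex_RInt_derive_on (f : R -> R) (a b : R) :
  a <= b -> (forall x, a <= x <= b -> ex_derive f x) -> ex_RInt f a b.
Proof.
  intros Hab Hf. apply (ex_RInt_continuous (V:=R_CompleteNormedModule)).
  intros x Hx. rewrite Rmin_left, Rmax_right in Hx by lra. exact (ex_derive_continuous f x (Hf x Hx)).
Qed.

Lemma ex_RInt_sum_f_R0 (f : nat -> R -> R) (a b : R) (N : nat) :
  (forall n, ex_RInt (f n) a b) -> ex_RInt (fun x => sum_f_R0 (fun n => f n x) N) a b.
Proof.
  intros Hf. induction N as [|N IH]; [apply Hf|].
  apply (ex_RInt_plus (V:=R_CompleteNormedModule)); auto.
Qed.

Lemma RInt_le_plus_scal (f g h : R -> R) (e c d : R) :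
  c <= d -> ex_RInt f c d -> ex_RInt g c d -> ex_RInt h c d ->
  (forall x, c < x < d -> f x <= g x + e * h x) ->
  RInt f c d <= RInt g c d + e * RInt h c d.
Proof.
  intros Hcd Hf Hg Hh Hfgh.
  assert (Heh : ex_RInt (fun x => e * h x) c d) by (apply (ex_RInt_scal (V:=R_CompleteNormedModule)); auto).
  rewrite <- (RInt_scal (V:=R_CompleteNormedModule)) by auto.
  rewrite <- (RInt_plus (V:=R_CompleteNormedModule)) by auto.
  apply RInt_le; auto. apply (ex_RInt_plus (V:=R_CompleteNormedModule)); auto.
Qed.

Lemma RInt_subinterval_le (h : R -> R) a b c d :
  a <= b -> b <= c -> c <= d ->
  ex_RInt h a b -> ex_RInt h b c -> ex_RInt h c d -> (forall x, a < x < d -> 0 <= h x) ->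
  RInt h b c <= RInt h a d.
Proof.
  intros Hab Hbc Hcd Hex1 Hex2 Hex3 Hpos.
  rewrite <- (RInt_Chasles h a b d), <- (RInt_Chasles h b c d) by
    (first [assumption | apply (ex_RInt_Chasles (V:=R_CompleteNormedModule)) with c; assumption]).
  assert (0 <= RInt h a b) by (apply RInt_ge_0; auto; intros; apply Hpos; lra).
  assert (0 <= RInt h c d) by (apply RInt_ge_0; auto; intros; apply Hpos; lra).
  change (RInt h b c <= RInt h a b + (RInt h b c + RInt h c d)). lra.
Qed.

Lemma lim01_RInt_pos_bounded (h : R -> R) (K : R) :
  (forall c d, 0 < c -> c <= d -> d < 1 -> ex_RInt h c d) ->
  (forall x, 0 < x < 1 -> 0 <= h x) ->
  (forall c d, 0 < c -> c <= d -> d < 1 -> RInt h c d <= K) ->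
  exists L, lim01 (RInt h) L.
Proof.
  intros Hex Hpos HK.
  set (E := fun v => exists c d, 0 < c /\ c <= d /\ d < 1 /\ v = RInt h c d).
  assert (Hb : bound E) by (exists K; intros v [c [d [? [? [? ->]]]]]; auto).
  assert (Hne : exists v, E v) by (exists (RInt h (1/2) (1/2)), (1/2), (1/2); repeat split; lra).
  destruct (completeness E Hb Hne) as [L [HLub HLlub]].
  exists L. intros eps Heps.
  assert (Happrox : exists v, E v /\ L - eps < v).
  { apply NNPP. intros Hn. assert (L <= L - eps); [|lra].
    apply HLlub. intros v Ev. apply Rnot_lt_le. intros Hv. apply Hn. eauto. }
  destruct Happrox as [v [[c0 [d0 [Hc0 [Hcd0 [Hd0 ->]]]]] Hv]].
  exists (Rmin c0 (1 - d0)). split; [apply Rmin_pos; lra|].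
  intros c d Hc Hc' Hcd Hd Hd'. pose proof (Rmin_l c0 (1 - d0)). pose proof (Rmin_r c0 (1 - d0)).
  assert (RInt h c d <= L) by (apply HLub; exists c, d; auto).
  assert (RInt h c0 d0 <= RInt h c d).
  { apply RInt_subinterval_le; try (apply Hex); try lra.
    intros x Hx. apply Hpos. lra. }
  apply Rabs_def1; lra.
Qed.

Lemma lim01_RInt_sum (f : nat -> R -> R) (L : nat -> R) (N : nat) :
  (forall n c d, 0 < c -> c <= d -> d < 1 -> ex_RInt (f n) c d) ->
  (forall n, lim01 (RInt (f n)) (L n)) ->
  lim01 (RInt (fun x => sum_f_R0 (fun n => f n x) N)) (sum_f_R0 L N).
Proof.
  intros Hex Hlim. induction N as [|N IH]; [apply Hlim|].
  apply lim01_ext with (fun c d => RInt (fun x => sum_f_R0 (fun n => f n x) N) c d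
                                   + RInt (f (S N)) c d).
  - intros c d Hc Hcd Hd. symmetry. apply (RInt_plus (V:=R_CompleteNormedModule)).
    + apply ex_RInt_sum_f_R0. intros n. apply Hex; auto.
    + apply Hex; auto.
  - apply lim01_plus; auto.
Qed.

Lemma lim01_RInt_scal (h : R -> R) (k L : R) :
  (forall c d, 0 < c -> c <= d -> d < 1 -> ex_RInt h c d) ->
  lim01 (RInt h) L -> lim01 (RInt (fun x => k * h x)) (k * L).
Proof.
  intros Hex Hlim. apply lim01_ext with (fun c d => k * RInt h c d).
  - intros c d Hc Hcd Hd. symmetry. apply (RInt_scal (V:=R_CompleteNormedModule)), Hex; auto.
  - now apply lim01_scal.
Qed.

Lemma improper_int_lim01 (g h : R -> R) (L : R) :
  improper_int g 0 1 L -> (forall x, 0 < x < 1 -> g x = h x) -> lim01 (RInt h) L.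
Proof.
  intros [Hex Hlim] Hgh eps Heps.
  destruct (Hlim eps Heps) as [delta [Hdelta H]].
  exists delta. split; [exact Hdelta|]. intros c d Hc Hc' Hcd Hd Hd'.
  destruct (Hex c d Hc Hcd Hd') as [pr].
  specialize (H c d pr Hc ltac:(lra) Hcd Hd Hd').
  rewrite <- RInt_Reals in H. rewrite <- (RInt_ext g h); [exact H|].
  intros x Hx. apply Hgh. rewrite Rmin_left, Rmax_right in Hx by lra. lra.
Qed.

Lemma lim01_improper_int (h : R -> R) (L : R) :
  (forall c d, 0 < c -> c <= d -> d < 1 -> ex_RInt h c d) ->
  lim01 (RInt h) L -> improper_int h 0 1 L.
Proof.
  intros Hex Hlim. split.
  - intros c d Hc Hcd Hd. constructor. apply ex_RInt_Reals_0, Hex; auto.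
  - intros eps Heps. destruct (Hlim eps Heps) as [delta [Hdelta H]].
    exists delta. split; [exact Hdelta|].
    intros c d pr Hc Hc' Hcd Hd Hd'. rewrite <- RInt_Reals. apply H; lra.
Qed.

(** * The inner integral *)

Definition nlog (x : R) : R := - ln x.

Lemma nlog_nonneg x : 0 < x <= 1 -> 0 <= nlog x.
Proof.
  intros Hx. unfold nlog. pose proof (ln_le x 1 ltac:(lra) ltac:(lra)). rewrite ln_1 in H. lra.
Qed.

Lemma nlog_1m_ge x : 0 < x < 1 -> x <= nlog (1 - x).
Proof.
  intros Hx. unfold nlog. pose proof (exp_ineq1_le (- x)).
  assert (ln (1 - x) <= ln (exp (- x))) by (apply ln_le; lra).
  rewrite ln_exp in H0. lra.
Qed.

Definition slice (n : nat) (x : R) : R :=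
  ((nlog x + nlog (1 - x)) ^ S n - nlog x ^ S n) / (INR (S n) * x).

Lemma slice_nonneg n x : 0 < x < 1 -> 0 <= slice n x.
Proof.
  intros Hx. unfold slice.
  pose proof (nlog_nonneg x ltac:(lra)). pose proof (nlog_nonneg (1 - x) ltac:(lra)).
  apply Rdiv_le_0_compat.
  - assert (nlog x ^ S n <= (nlog x + nlog (1 - x)) ^ S n) by (apply pow_incr; lra). lra.
  - apply Rmult_lt_0_compat; [apply lt_0_INR; lia | lra].
Qed.

Lemma slice_ge n x : 0 < x < 1 -> nlog x ^ n <= slice n x.
Proof.
  intros Hx. unfold slice.
  pose proof (nlog_nonneg x ltac:(lra)) as HA. pose proof (nlog_nonneg (1 - x) ltac:(lra)) as HB.
  pose proof (nlog_1m_ge x Hx). pose proof (pow_S_plus_ge _ _ n HA HB).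
  pose proof (pow_le (nlog x) n HA).
  assert (HS : 0 < INR (S n)) by (apply lt_0_INR; lia).
  apply Rmult_le_reg_r with (INR (S n) * x); [apply Rmult_lt_0_compat; lra|].
  unfold Rdiv. rewrite Rmult_assoc, Rinv_l, Rmult_1_r by (apply Rgt_not_eq, Rmult_lt_0_compat; lra).
  assert (INR (S n) * nlog x ^ n * x <= INR (S n) * nlog x ^ n * nlog (1 - x))
    by (apply Rmult_le_compat_l; [apply Rmult_le_pos|]; lra).
  lra.
Qed.

Lemma slice_is_RInt n x : 0 < x < 1 -> is_RInt (fun y => integrand n x y) (1 - x) 1 (slice n x).
Proof.
  intros Hx.
  assert (HSn : INR (S n) <> 0) by (apply not_0_INR; lia).
  set (prim := fun y => - (- ln (x * y)) ^ S n / (INR (S n) * x)).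
  replace (slice n x) with (minus (prim 1) (prim (1 - x))).
  - apply (is_RInt_derive (V:=R_CompleteNormedModule)).
    + intros y Hy. rewrite Rmin_left, Rmax_right in Hy by lra.
      unfold prim, integrand. auto_derive.
      * apply Rmult_lt_0_compat; lra.
      * change (match n with 0%nat => 1 | S _ => INR n + 1 end) with (INR (S n)).
        field. repeat split; auto; lra.
    + intros y Hy. rewrite Rmin_left, Rmax_right in Hy by lra.
      assert (Hd : ex_derive (fun y => integrand n x y) y).
      { unfold integrand. auto_derive.
        assert (0 < x * y) by (apply Rmult_lt_0_compat; lra). repeat split; lra. }
      exact (ex_derive_continuous _ y Hd).
  - unfold prim, slice, nlog. change (minus ?u ?v) with (u - v).
    match goal with |- ?a = ?b => change (@eq R a b) end.
    rewrite Rmult_1_r, ln_mult by lra.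
    replace (- (ln x + ln (1 - x))) with (- ln x + - ln (1 - x)) by ring.
    field. split; [lra | exact HSn].
Qed.

Lemma ex_derive_slice n x : 0 < x < 1 -> ex_derive (slice n) x.
Proof.
  intros Hx. unfold slice, nlog. auto_derive. repeat split; try lra.
  change (match n with 0%nat => 1 | S _ => INR n + 1 end) with (INR (S n)).
  apply Rgt_not_eq, Rmult_lt_0_compat; [apply lt_0_INR; lia | lra].
Qed.

Lemma ex_RInt_slice n c d : 0 < c -> c <= d -> d < 1 -> ex_RInt (slice n) c d.
Proof. intros. apply ex_RInt_derive_on; auto. intros; apply ex_derive_slice; lra. Qed.

Lemma is_I_lim01 n L : is_I n L -> lim01 (RInt (slice n)) L.
Proof.
  intros [g [Hg Himp]]. apply (improper_int_lim01 g); auto.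
  intros x Hx. destruct (Hg x Hx) as [pr <-].
  rewrite <- RInt_Reals. apply is_RInt_unique, slice_is_RInt, Hx.
Qed.

Lemma lim01_is_I n L : lim01 (RInt (slice n)) L -> is_I n L.
Proof.
  intros Hlim. exists (slice n). split.
  - intros x Hx. assert (Hex : ex_RInt (fun y => integrand n x y) (1 - x) 1)
      by (eexists; apply slice_is_RInt, Hx).
    exists (ex_RInt_Reals_0 _ _ _ Hex).
    rewrite <- RInt_Reals. apply is_RInt_unique, slice_is_RInt, Hx.
  - apply lim01_improper_int; [apply ex_RInt_slice | exact Hlim].
Qed.

(** * The generating function of the inner integrals *)

Definition slice_gf (s x : R) : R :=
  (exp (s * (nlog x + nlog (1 - x))) - exp (s * nlog x)) / (s * x).

Definition slice_gf_sum (s : R) (N : nat) (x : R) : R :=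
  sum_f_R0 (fun n => s ^ n * (slice n x / INR (fact n))) N.

(* s^n slice n x / n! = ((s (A + B))^(n+1) - (s A)^(n+1)) / ((n+1)! s x), with A = nlog x,
   B = nlog (1 - x): the partial sums are truncated exponential series. *)
Lemma slice_gf_sum_closed s N x : s <> 0 -> 0 < x ->
  slice_gf_sum s N x =
  sum_f_R0 (fun m => ((s * (nlog x + nlog (1 - x))) ^ m - (s * nlog x) ^ m) / INR (fact m)) (S N)
  / (s * x).
Proof.
  intros Hs Hx. unfold slice_gf_sum. induction N as [|N IH].
  - simpl. unfold slice. simpl. field. lra.
  - rewrite (tech5 _ N), IH, (tech5 _ (S N)). unfold slice. rewrite !Rpow_mult_distr.
    rewrite (fact_simpl (S N)), mult_INR.
    pose proof (INR_fact_neq_0 (S N)).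
    assert (INR (S (S N)) <> 0) by (apply not_0_INR; lia).
    replace (s ^ S (S N)) with (s * s ^ S N) by (simpl; ring).
    field. repeat split; auto. lra.
Qed.

Lemma slice_gf_sum_cv s x : s <> 0 -> 0 < x ->
  Un_cv (fun N => slice_gf_sum s N x) (slice_gf s x).
Proof.
  intros Hs Hx.
  pose proof (CV_mult _ _ _ _
    (CV_shift' _ 1 _ (Un_cv_exp_sub (s * (nlog x + nlog (1 - x))) (s * nlog x)))
    (Un_cv_const (/ (s * x)))) as H.
  eapply Un_cv_ext; [|exact H]. intros N. cbv beta.
  rewrite slice_gf_sum_closed, Nat.add_1_r by assumption. reflexivity.
Qed.

Lemma ex_RInt_slice_gf_sum s N c d : 0 < c -> c <= d -> d < 1 ->
  ex_RInt (slice_gf_sum s N) c d.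
Proof.
  intros Hc Hcd Hd. apply ex_RInt_sum_f_R0. intros n.
  apply (ex_RInt_ext (fun x => s ^ n / INR (fact n) * slice n x)).
  - intros x _. unfold Rdiv. match goal with |- ?a = ?b => change (@eq R a b) end. ring.
  - apply (ex_RInt_scal (V:=R_CompleteNormedModule)), ex_RInt_slice; auto.
Qed.

Lemma slice_gf_sum_le s N x : 0 < s -> 0 < x < 1 -> slice_gf_sum s N x <= slice_gf s x.
Proof.
  intros Hs Hx. apply sum_incr; [apply slice_gf_sum_cv; lra|].
  intros n. apply Rmult_le_pos; [apply pow_le; lra|].
  apply Rdiv_le_0_compat; [apply slice_nonneg, Hx | apply INR_fact_lt_0].
Qed.

Lemma slice_le_gf s n x : 0 < s -> 0 < x < 1 ->
  slice n x <= INR (fact n) / s ^ n * slice_gf s x.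
Proof.
  intros Hs Hx.
  assert (Hterm : s ^ n * (slice n x / INR (fact n)) <= slice_gf s x).
  { eapply Rle_trans; [|apply (slice_gf_sum_le s n x Hs Hx)]. unfold slice_gf_sum.
    destruct n as [|n]; [simpl; lra|]. rewrite tech5.
    assert (0 <= sum_f_R0 (fun k => s ^ k * (slice k x / INR (fact k))) n); [|lra].
    apply cond_pos_sum. intros k. apply Rmult_le_pos; [apply pow_le; lra|].
    apply Rdiv_le_0_compat; [apply slice_nonneg, Hx | apply INR_fact_lt_0]. }
  pose proof (INR_fact_lt_0 n). pose proof (pow_lt s n Hs).
  replace (slice n x) with (INR (fact n) / s ^ n * (s ^ n * (slice n x / INR (fact n))))
    by (field; lra).
  apply Rmult_le_compat_l; [apply Rdiv_le_0_compat; lra | exact Hterm].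
Qed.

Lemma slice_gf_sum_tail t s x M k : 0 <= t <= s -> 0 < s -> 0 < x < 1 ->
  Rabs (slice_gf_sum (- t) (M + k) x - slice_gf_sum (- t) M x) <= (t / s) ^ S M * slice_gf s x.
Proof.
  intros Ht Hs Hx. unfold slice_gf_sum.
  assert (Ha : forall n, 0 <= slice n x / INR (fact n))
    by (intros n; apply Rdiv_le_0_compat; [apply slice_nonneg, Hx | apply INR_fact_lt_0]).
  eapply Rle_trans; [apply (sum_alt_tail_le (fun n => slice n x / INR (fact n)) t s); auto|].
  apply Rmult_le_compat_l; [apply pow_le, Rdiv_le_0_compat; lra|].
  pose proof (slice_gf_sum_le s (M + k) x Hs Hx).
  assert (0 <= slice_gf_sum s M x).
  { apply cond_pos_sum. intros n. apply Rmult_le_pos; [apply pow_le; lra | apply Ha]. }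
  unfold slice_gf_sum in *. lra.
Qed.

Lemma slice_gf_sum_dist t s x N : 0 < t <= s -> 0 < x < 1 ->
  Rabs (slice_gf (- t) x - slice_gf_sum (- t) N x) <= (t / s) ^ S N * slice_gf s x.
Proof.
  intros Ht Hx. apply (Un_cv_dist_le (fun n => slice_gf_sum (- t) n x) _ _ _ N).
  { apply slice_gf_sum_cv; lra. }
  intros n Hn. replace n with (N + (n - N))%nat by lia.
  apply slice_gf_sum_tail; lra.
Qed.

Definition gf_bound (s : R) : R := 8 / (s * (1 - s)).

Lemma slice_gf_le s x : 0 < s <= 1 -> 0 < x < 1 ->
  slice_gf s x <= 4 / s * (exp (- s * ln x) + exp (- s * ln (1 - x))).
Proof.
  intros Hs Hx. unfold slice_gf.
  pose proof (nlog_nonneg x ltac:(lra)) as HA. pose proof (nlog_nonneg (1 - x) ltac:(lra)) as HB.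
  set (X := exp (s * nlog x)). set (Y := exp (s * nlog (1 - x))).
  replace (- s * ln x) with (s * nlog x) by (unfold nlog; ring).
  replace (- s * ln (1 - x)) with (s * nlog (1 - x)) by (unfold nlog; ring).
  rewrite Rmult_plus_distr_l, exp_plus. fold X Y.
  assert (HX : 0 < X) by apply exp_pos.
  assert (HY : 1 <= Y) by (rewrite <- exp_0; apply exp_le_compat, Rmult_le_pos; lra).
  assert (HXx : X * x <= 1).
  { assert (X <= / x).
    { unfold X. rewrite <- (exp_ln (/ x)), ln_Rinv by (try apply Rinv_0_lt_compat; lra).
      apply exp_le_compat. unfold nlog in *. nra. }
    apply Rmult_le_reg_r with (/ x); [apply Rinv_0_lt_compat; lra|].
    rewrite Rmult_assoc, Rinv_r, Rmult_1_r, Rmult_1_l by lra. exact H. }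
  assert (HYx : Y * (1 - x) <= 1).
  { assert (Y <= / (1 - x)).
    { unfold Y. rewrite <- (exp_ln (/ (1 - x))), ln_Rinv by (try apply Rinv_0_lt_compat; lra).
      apply exp_le_compat. unfold nlog in *. nra. }
    apply Rmult_le_reg_r with (/ (1 - x)); [apply Rinv_0_lt_compat; lra|].
    rewrite Rmult_assoc, Rinv_r, Rmult_1_r, Rmult_1_l by lra. exact H. }
  assert (Key : X * Y - X <= 4 * x * (X + Y)).
  { destruct (Rle_or_lt x (1 / 2)).
    - assert (Y - 1 <= 2 * x) by nra. nra.
    - nra. }
  replace (4 / s * (X + Y)) with (4 * x * (X + Y) / (s * x)) by (field; lra).
  unfold Rdiv. apply Rmult_le_compat_r; [|exact Key].
  apply Rlt_le, Rinv_0_lt_compat, Rmult_lt_0_compat; lra.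
Qed.

Lemma ex_RInt_slice_gf s c d : s <> 0 -> 0 < c -> c <= d -> d < 1 -> ex_RInt (slice_gf s) c d.
Proof.
  intros. apply ex_RInt_derive_on; auto. intros x Hx. unfold slice_gf, nlog.
  auto_derive. repeat split; try lra. apply Rmult_integral_contrapositive. lra.
Qed.

Lemma RInt_slice_gf_le s c d : 0 < s < 1 -> 0 < c -> c <= d -> d < 1 ->
  RInt (slice_gf s) c d <= gf_bound s.
Proof.
  intros Hs Hc Hcd Hd.
  set (h := fun x => 4 / s * (exp (- s * ln x) + exp (- s * ln (1 - x)))).
  set (prim := fun x => 4 / s * (exp ((1 - s) * ln x) - exp ((1 - s) * ln (1 - x))) / (1 - s)).
  assert (Hshift : forall y, 0 < y -> exp ((1 - s) * ln y) = exp (- s * ln y) * y).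
  { intros y Hy. replace ((1 - s) * ln y) with ((- s + 1) * ln y) by ring.
    apply exp_mul_ln_succ, Hy. }
  assert (Hh : is_RInt h c d (minus (prim d) (prim c))).
  { apply (is_RInt_derive (V:=R_CompleteNormedModule)).
    - intros x Hx. rewrite Rmin_left, Rmax_right in Hx by lra.
      unfold prim, h. auto_derive; [lra|].
      replace (1 + - x) with (1 - x) by ring. rewrite !Hshift by lra.
      match goal with |- ?a = ?b => change (@eq R a b) end. field. repeat split; lra.
    - intros x Hx. rewrite Rmin_left, Rmax_right in Hx by lra.
      assert (Hd' : ex_derive h x) by (unfold h; auto_derive; lra).
      exact (ex_derive_continuous _ x Hd'). }
  apply Rle_trans with (RInt h c d).
  - apply RInt_le; auto.
    + apply ex_RInt_slice_gf; lra.
    + eexists; exact Hh.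
    + intros x Hx. apply slice_gf_le; lra.
  - rewrite (is_RInt_unique _ _ _ _ Hh). change (minus ?u ?v) with (u - v). unfold prim, gf_bound.
    assert (Hle1 : forall y, 0 < y < 1 -> exp ((1 - s) * ln y) <= 1).
    { intros y Hy. apply exp_le_1.
      pose proof (nlog_nonneg y ltac:(lra)). unfold nlog in *. nra. }
    pose proof (Hle1 d ltac:(lra)). pose proof (Hle1 (1 - c) ltac:(lra)).
    pose proof (exp_pos ((1 - s) * ln (1 - d))). pose proof (exp_pos ((1 - s) * ln c)).
    apply Rmult_le_reg_r with (s * (1 - s)); [apply Rmult_lt_0_compat; lra|].
    replace ((4 / s * (exp ((1 - s) * ln d) - exp ((1 - s) * ln (1 - d))) / (1 - s) -
       4 / s * (exp ((1 - s) * ln c) - exp ((1 - s) * ln (1 - c))) / (1 - s)) * (s * (1 - s)))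
      with (4 * (exp ((1 - s) * ln d) - exp ((1 - s) * ln (1 - d)) -
                 exp ((1 - s) * ln c) + exp ((1 - s) * ln (1 - c)))) by (field; lra).
    replace (8 / (s * (1 - s)) * (s * (1 - s))) with 8 by (field; lra). lra.
Qed.

Lemma RInt_slice_le s n c d : 0 < s < 1 -> 0 < c -> c <= d -> d < 1 ->
  RInt (slice n) c d <= INR (fact n) / s ^ n * gf_bound s.
Proof.
  intros Hs Hc Hcd Hd.
  assert (HK : 0 <= INR (fact n) / s ^ n)
    by (apply Rdiv_le_0_compat; [apply pos_INR | apply pow_lt; lra]).
  apply Rle_trans with (RInt (fun x => INR (fact n) / s ^ n * slice_gf s x) c d).
  - apply RInt_le; auto.
    + apply ex_RInt_slice; auto.
    + apply (ex_RInt_scal (V:=R_CompleteNormedModule)), ex_RInt_slice_gf; lra.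
    + intros x Hx. apply slice_le_gf; lra.
  - rewrite (RInt_scal (V:=R_CompleteNormedModule)) by (apply ex_RInt_slice_gf; lra).
    apply Rmult_le_compat_l; [exact HK | apply RInt_slice_gf_le; auto].
Qed.

Lemma is_I_exists n : exists L, is_I n L.
Proof.
  destruct (lim01_RInt_pos_bounded (slice n) (INR (fact n) / (1/2) ^ n * gf_bound (1/2)))
    as [L HL].
  - apply ex_RInt_slice.
  - intros; apply slice_nonneg; auto.
  - intros; apply RInt_slice_le; auto; lra.
  - exists L. apply lim01_is_I, HL.
Qed.

Lemma is_I_le n L s : is_I n L -> 0 < s < 1 -> L <= INR (fact n) / s ^ n * gf_bound s.
Proof.
  intros HL Hs. apply (lim01_le _ _ _ _ (is_I_lim01 n L HL) (lim01_const _)).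
  apply near01_everywhere. intros c d Hc Hcd Hd. apply RInt_slice_le; auto.
Qed.

(** * Lower bound and divergence *)

Definition nlog_prim (n : nat) (x : R) : R :=
  x * sum_f_R0 (fun k => nlog x ^ k / INR (fact k)) n.

Lemma is_derive_nlog_prim n x : 0 < x -> is_derive (nlog_prim n) x (nlog x ^ n / INR (fact n)).
Proof.
  intros Hx. unfold nlog_prim, nlog. induction n as [|n IH].
  - simpl. auto_derive; [exact I|]. simpl. field.
  - assert (Hlast : is_derive (fun y => y * ((- ln y) ^ S n / INR (fact (S n)))) x
       ((- ln x) ^ S n / INR (fact (S n)) - (- ln x) ^ n / INR (fact n))).
    { auto_derive; [lra|].
      change (match n with 0%nat => 1 | S _ => INR n + 1 end) with (INR (S n)).
      change (fact n + n * fact n)%nat with (fact (S n)).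
      rewrite fact_simpl, mult_INR, <- tech_pow_Rmult.
      pose proof (INR_fact_neq_0 n). assert (INR (S n) <> 0) by (apply not_0_INR; lia).
      field. repeat split; auto; lra. }
    replace ((- ln x) ^ S n / INR (fact (S n))) with
      (plus ((- ln x) ^ n / INR (fact n))
            ((- ln x) ^ S n / INR (fact (S n)) - (- ln x) ^ n / INR (fact n)))
      by (change (plus ?u ?v) with (u + v); match goal with |- ?a = ?b => change (@eq R a b) end; ring).
    eapply is_derive_ext; [|exact (is_derive_plus _ _ _ _ _ IH Hlast)].
    intros y. simpl. change (plus ?u ?v) with (u + v). ring.
Qed.

Lemma RInt_nlog_pow n c d : 0 < c -> c <= d ->
  ex_RInt (fun x => nlog x ^ n) c d /\
  RInt (fun x => nlog x ^ n) c d = INR (fact n) * (nlog_prim n d - nlog_prim n c).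
Proof.
  intros Hc Hcd.
  assert (Hh : is_RInt (fun x => nlog x ^ n) c d
     (minus (INR (fact n) * nlog_prim n d) (INR (fact n) * nlog_prim n c))).
  { apply (is_RInt_derive (V:=R_CompleteNormedModule) (fun x => INR (fact n) * nlog_prim n x)).
    - intros x Hx. rewrite Rmin_left, Rmax_right in Hx by lra.
      replace (nlog x ^ n) with (scal (INR (fact n)) (nlog x ^ n / INR (fact n))).
      + apply is_derive_scal, is_derive_nlog_prim. lra.
      + change (scal ?u ?v) with (u * v).
        match goal with |- ?a = ?b => change (@eq R a b) end.
        field. apply INR_fact_neq_0.
    - intros x Hx. rewrite Rmin_left, Rmax_right in Hx by lra.
      assert (Hd : ex_derive (fun x => nlog x ^ n) x) by (unfold nlog; auto_derive; lra).
      exact (ex_derive_continuous _ x Hd). }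
  split; [eexists; exact Hh|].
  rewrite (is_RInt_unique _ _ _ _ Hh). change (minus ?u ?v) with (u - v).
  match goal with |- ?a = ?b => change (@eq R a b) end. ring.
Qed.

Lemma nlog_prim_ge n x : 0 < x <= 1 -> x <= nlog_prim n x.
Proof.
  intros Hx. unfold nlog_prim.
  assert (1 <= sum_f_R0 (fun k => nlog x ^ k / INR (fact k)) n); [|nra].
  induction n as [|n IH]; [simpl; lra|]. rewrite tech5.
  assert (0 <= nlog x ^ S n / INR (fact (S n))); [|lra].
  apply Rdiv_le_0_compat; [apply pow_le, nlog_nonneg, Hx | apply INR_fact_lt_0].
Qed.

(* The witness is c0 = exp(-Y) with Y = 4 (n+1) (n+1)!: then nlog_prim n c0 <= (n+1) Y^n / exp Y,
   and exp Y >= Y^(n+1)/(n+1)! = 4 (n+1) Y^n. *)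
Lemma nlog_prim_small n : exists c0, 0 < c0 <= 1 / 4 /\ nlog_prim n c0 <= 1 / 4.
Proof.
  set (Y := 4 * INR (S n) * INR (fact (S n))).
  assert (HY : 1 <= Y).
  { unfold Y. assert (1 <= INR (S n)) by (apply (le_INR 1); lia).
    assert (1 <= INR (fact (S n))) by (apply (le_INR 1), lt_O_fact). nra. }
  assert (Hsum : sum_f_R0 (fun k => Y ^ k / INR (fact k)) n <= INR (S n) * Y ^ n).
  { rewrite Rmult_comm, <- sum_cte. apply sum_Rle. intros k Hk.
    assert (Y ^ k <= Y ^ n) by (apply Rle_pow; auto).
    assert (1 <= INR (fact k)) by (apply (le_INR 1), lt_O_fact).
    pose proof (pow_le Y k ltac:(lra)).
    apply Rle_trans with (Y ^ k); auto.
    apply Rmult_le_reg_r with (INR (fact k)); [lra|].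
    unfold Rdiv. rewrite Rmult_assoc, Rinv_l by lra. nra. }
  assert (HexpY : 4 * INR (S n) * Y ^ n <= exp Y).
  { eapply Rle_trans; [|apply (exp_ge_taylor Y (S n)); lra]. rewrite tech5.
    assert (0 <= sum_f_R0 (fun k => Y ^ k / INR (fact k)) n).
    { apply cond_pos_sum. intros k. apply Rdiv_le_0_compat; [apply pow_le; lra | apply INR_fact_lt_0]. }
    replace (Y ^ S n / INR (fact (S n))) with (4 * INR (S n) * Y ^ n).
    - lra.
    - change (Y ^ S n) with (Y * Y ^ n). unfold Y at 2. field. apply INR_fact_neq_0. }
  assert (Hprim : nlog_prim n (exp (- Y)) <= 1 / 4).
  { unfold nlog_prim, nlog. rewrite ln_exp, Ropp_involutive, exp_Ropp.
    pose proof (exp_pos Y). pose proof (pow_le Y n ltac:(lra)).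
    assert (0 < INR (S n)) by (apply lt_0_INR; lia).
    apply Rmult_le_reg_l with (exp Y); auto.
    rewrite <- Rmult_assoc, Rinv_r, Rmult_1_l by lra. nra. }
  exists (exp (- Y)). split; [|exact Hprim].
  assert (exp (- Y) <= 1) by (apply exp_le_1; lra).
  pose proof (exp_pos (- Y)). pose proof (nlog_prim_ge n (exp (- Y))). lra.
Qed.

Lemma is_I_ge n L : is_I n L -> INR (fact n) / 2 <= L.
Proof.
  intros HL. destruct (nlog_prim_small n) as [c0 [Hc0 Hprim]].
  apply (lim01_le _ _ _ _ (lim01_const _) (is_I_lim01 n L HL)).
  exists (Rmin c0 (1 / 4)). split; [apply Rmin_pos; lra|].
  intros c d Hc Hc' Hcd Hd Hd'. pose proof (Rmin_l c0 (1 / 4)). pose proof (Rmin_r c0 (1 / 4)).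
  destruct (RInt_nlog_pow n c0 (3 / 4) ltac:(lra) ltac:(lra)) as [Hex Hval].
  assert (Hsub : RInt (slice n) c0 (3 / 4) <= RInt (slice n) c d).
  { apply RInt_subinterval_le; try (apply ex_RInt_slice; lra); try lra.
    intros x Hx. apply slice_nonneg. lra. }
  assert (Hcmp : RInt (fun x => nlog x ^ n) c0 (3 / 4) <= RInt (slice n) c0 (3 / 4)).
  { apply RInt_le; [lra | exact Hex | apply ex_RInt_slice; lra |].
    intros x Hx. apply slice_ge. lra. }
  pose proof (nlog_prim_ge n (3 / 4) ltac:(lra)). pose proof (INR_fact_lt_0 n).
  assert (INR (fact n) * (1 / 2) <= INR (fact n) * (nlog_prim n (3 / 4) - nlog_prim n c0))
    by (apply Rmult_le_compat_l; lra).
  lra.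
Qed.

Lemma is_I_not_summable (I : nat -> R) : (forall n, is_I n (I n)) ->
  ~ exists l, infinite_sum (fun n => (-1) ^ n * I n / INR (fact n)) l.
Proof.
  intros HI [l Hl]. destruct (Hl (1 / 4)) as [N HN]; [lra|].
  pose proof (HN N ltac:(lia)) as H1. pose proof (HN (S N) ltac:(lia)) as H2.
  unfold Rdist in H1, H2. rewrite tech5 in H2.
  set (u := (-1) ^ S N * I (S N) / INR (fact (S N))) in H2.
  assert (Hu : Rabs u < 1 / 2).
  { match type of H2 with Rabs (?p + u - l) < _ =>
      replace u with ((p + u - l) - (p - l)) by ring end.
    eapply Rle_lt_trans; [apply Rabs_triang|]. rewrite Rabs_Ropp. lra. }
  pose proof (is_I_ge (S N) (I (S N)) (HI (S N))). pose proof (INR_fact_lt_0 (S N)).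
  unfold u, Rdiv in Hu. rewrite !Rabs_mult, pow_1_abs, Rabs_inv, Rmult_1_l in Hu.
  rewrite (Rabs_right (INR _)), (Rabs_right (I _)) in Hu by (apply Rle_ge; lra).
  apply (Rmult_lt_compat_r (INR (fact (S N)))) in Hu; [|lra].
  rewrite Rmult_assoc, Rinv_l in Hu by lra. lra.
Qed.

(** * Abel summation *)

Lemma slice_gf_opp_bounds t x : 0 < t < 1 -> 0 < x < 1 ->
  1 - exp (t * ln (1 - x)) <= slice_gf (- t) x <= exp (t * ln x) / t.
Proof.
  intros Ht Hx.
  set (U := exp (t * ln x)). set (V := exp (t * ln (1 - x))).
  replace (slice_gf (- t) x) with ((U - U * V) / (t * x)).
  2:{ unfold slice_gf, nlog, U, V. rewrite <- exp_plus.
      replace (- t * (- ln x + - ln (1 - x))) with (t * ln x + t * ln (1 - x)) by ring.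
      replace (- t * - ln x) with (t * ln x) by ring. field. lra. }
  pose proof (nlog_nonneg x ltac:(lra)). pose proof (nlog_nonneg (1 - x) ltac:(lra)).
  unfold nlog in *.
  assert (HU : x <= U).
  { unfold U. rewrite <- (exp_ln x) at 1 by lra. apply exp_le_compat. nra. }
  assert (HV : 1 - x <= V).
  { unfold V. rewrite <- (exp_ln (1 - x)) at 1 by lra. apply exp_le_compat. nra. }
  assert (HV1 : V <= 1) by (unfold V; apply exp_le_1; nra).
  assert (HU0 : 0 < U) by apply exp_pos.
  assert (Htx : 0 < t * x) by (apply Rmult_lt_0_compat; lra).
  split.
  - apply Rmult_le_reg_r with (t * x); [exact Htx|].
    unfold Rdiv. rewrite Rmult_assoc, Rinv_l, Rmult_1_r by lra.
    assert (0 <= (U - t * x) * (1 - V)) by (apply Rmult_le_pos; nra). nra.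
  - apply Rmult_le_reg_r with (t * x); [exact Htx|].
    unfold Rdiv. rewrite Rmult_assoc, Rinv_l, Rmult_1_r by lra.
    replace (U * / t * (t * x)) with (U * x) by (field; lra).
    assert (0 <= U * (x - (1 - V))) by (apply Rmult_le_pos; nra). nra.
Qed.

Lemma RInt_one_sub_pow_ge t c d : 0 < t < 1 -> 0 < c -> c <= d -> d < 1 ->
  ex_RInt (fun x => 1 - exp (t * ln (1 - x))) c d /\
  t / (t + 1) - (c + (1 - d)) <= RInt (fun x => 1 - exp (t * ln (1 - x))) c d.
Proof.
  intros Ht Hc Hcd Hd.
  set (prim := fun x => x + exp ((t + 1) * ln (1 - x)) / (t + 1)).
  assert (Hh : is_RInt (fun x => 1 - exp (t * ln (1 - x))) c d (minus (prim d) (prim c))).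
  { apply (is_RInt_derive (V:=R_CompleteNormedModule)).
    - intros x Hx. rewrite Rmin_left, Rmax_right in Hx by lra.
      unfold prim. auto_derive; [lra|].
      replace (1 + - x) with (1 - x) by ring. rewrite !exp_mul_ln_succ by lra.
      match goal with |- ?a = ?b => change (@eq R a b) end. field. lra.
    - intros x Hx. rewrite Rmin_left, Rmax_right in Hx by lra.
      assert (Hd' : ex_derive (fun x => 1 - exp (t * ln (1 - x))) x) by (auto_derive; lra).
      exact (ex_derive_continuous _ x Hd'). }
  split; [eexists; exact Hh|].
  rewrite (is_RInt_unique _ _ _ _ Hh). change (minus ?u ?v) with (u - v). unfold prim.
  pose proof (exp_pos ((t + 1) * ln (1 - d))).
  assert (exp ((t + 1) * ln (1 - c)) <= 1).
  { apply exp_le_1.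
    pose proof (nlog_nonneg (1 - c) ltac:(lra)). unfold nlog in *. nra. }
  apply Rmult_le_reg_r with (t + 1); [lra|].
  replace ((t / (t + 1) - (c + (1 - d))) * (t + 1)) with (t - (c + (1 - d)) * (t + 1)) by (field; lra).
  match goal with |- _ <= ?r =>
    replace r with ((d - c) * (t + 1) + exp ((t + 1) * ln (1 - d)) - exp ((t + 1) * ln (1 - c)))
      by (field; lra) end.
  nra.
Qed.

Lemma RInt_pow_div_le t c d : 0 < t < 1 -> 0 < c -> c <= d -> d < 1 ->
  ex_RInt (fun x => exp (t * ln x) / t) c d /\
  RInt (fun x => exp (t * ln x) / t) c d <= 1 / (t * (t + 1)).
Proof.
  intros Ht Hc Hcd Hd.
  set (prim := fun x => exp ((t + 1) * ln x) / (t * (t + 1))).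
  assert (Hh : is_RInt (fun x => exp (t * ln x) / t) c d (minus (prim d) (prim c))).
  { apply (is_RInt_derive (V:=R_CompleteNormedModule)).
    - intros x Hx. rewrite Rmin_left, Rmax_right in Hx by lra.
      unfold prim. auto_derive; [lra|]. rewrite !exp_mul_ln_succ by lra.
      match goal with |- ?a = ?b => change (@eq R a b) end. field. lra.
    - intros x Hx. rewrite Rmin_left, Rmax_right in Hx by lra.
      assert (Hd' : ex_derive (fun x => exp (t * ln x) / t) x) by (auto_derive; lra).
      exact (ex_derive_continuous _ x Hd'). }
  split; [eexists; exact Hh|].
  rewrite (is_RInt_unique _ _ _ _ Hh). change (minus ?u ?v) with (u - v). unfold prim.
  pose proof (exp_pos ((t + 1) * ln c)).
  assert (exp ((t + 1) * ln d) <= 1).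
  { apply exp_le_1.
    pose proof (nlog_nonneg d ltac:(lra)). unfold nlog in *. nra. }
  assert (0 < t * (t + 1)) by nra.
  unfold Rdiv. rewrite <- Rmult_minus_distr_r.
  apply Rmult_le_compat_r; [apply Rlt_le, Rinv_0_lt_compat; auto | lra].
Qed.

Lemma lim01_RInt_slice_gf_sum (I : nat -> R) s N : (forall n, is_I n (I n)) ->
  lim01 (RInt (slice_gf_sum s N)) (sum_f_R0 (fun n => s ^ n * (I n / INR (fact n))) N).
Proof.
  intros HI. unfold slice_gf_sum.
  apply lim01_ext with
    (RInt (fun x => sum_f_R0 (fun n => s ^ n / INR (fact n) * slice n x) N)).
  { intros c d Hc Hcd Hd. apply RInt_ext. intros x _. apply sum_eq. intros n _.
    unfold Rdiv. ring. }
  replace (sum_f_R0 (fun n => s ^ n * (I n / INR (fact n))) N)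
    with (sum_f_R0 (fun n => s ^ n / INR (fact n) * I n) N)
    by (apply sum_eq; intros; unfold Rdiv; ring).
  apply (lim01_RInt_sum (fun n x => s ^ n / INR (fact n) * slice n x)).
  - intros n c d Hc Hcd Hd.
    apply (ex_RInt_scal (V:=R_CompleteNormedModule)), ex_RInt_slice; auto.
  - intros n. apply lim01_RInt_scal; [apply ex_RInt_slice | apply is_I_lim01, HI].
Qed.

(* Integrate 1 - (1-x)^t - q^(N+1) slice_gf s x <= slice_gf_sum (-t) N x
   <= x^t/t + q^(N+1) slice_gf s x, where q = t/s. *)
Lemma abel_partial_sum_bounds (I : nat -> R) t N : (forall n, is_I n (I n)) -> 0 < t < 1 ->
  let s := (1 + t) / 2 in
  let err := (t / s) ^ S N * gf_bound s in
  t / (t + 1) - err <= sum_f_R0 (fun n => (- t) ^ n * (I n / INR (fact n))) N <=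
  1 / (t * (t + 1)) + err.
Proof.
  intros HI Ht s err.
  assert (Hs : 0 < s < 1) by (unfold s; lra).
  assert (Hdist : forall x, 0 < x < 1 -> Rabs (slice_gf (- t) x - slice_gf_sum (- t) N x)
                                         <= (t / s) ^ S N * slice_gf s x)
    by (intros; apply slice_gf_sum_dist; unfold s; lra).
  assert (Herr : forall c d, 0 < c -> c <= d -> d < 1 -> (t / s) ^ S N * RInt (slice_gf s) c d <= err).
  { intros c d Hc Hcd Hd. apply Rmult_le_compat_l; [apply pow_le, Rdiv_le_0_compat; lra|].
    apply RInt_slice_gf_le; auto. }
  pose proof (lim01_RInt_slice_gf_sum I (- t) N HI) as Hlim.
  split.
  - apply (lim01_le _ _ _ _ (lim01_sub_gap (t / (t + 1) - err)) Hlim).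
    apply near01_everywhere. intros c d Hc Hcd Hd.
    destruct (RInt_one_sub_pow_ge t c d Ht Hc Hcd Hd) as [Hex Hlow].
    pose proof (Herr c d Hc Hcd Hd).
    assert (RInt (fun x => 1 - exp (t * ln (1 - x))) c d <=
      RInt (slice_gf_sum (- t) N) c d + (t / s) ^ S N * RInt (slice_gf s) c d); [|lra].
    apply RInt_le_plus_scal; auto using ex_RInt_slice_gf_sum.
    { apply ex_RInt_slice_gf; lra. }
    intros x Hx. pose proof (slice_gf_opp_bounds t x Ht ltac:(lra)).
    pose proof (Hdist x ltac:(lra)) as Hx'. apply Rabs_le_between in Hx'. lra.
  - apply (lim01_le _ _ _ _ Hlim (lim01_const (1 / (t * (t + 1)) + err))).
    apply near01_everywhere. intros c d Hc Hcd Hd.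
    destruct (RInt_pow_div_le t c d Ht Hc Hcd Hd) as [Hex Hup].
    pose proof (Herr c d Hc Hcd Hd).
    assert (RInt (slice_gf_sum (- t) N) c d <=
      RInt (fun x => exp (t * ln x) / t) c d + (t / s) ^ S N * RInt (slice_gf s) c d); [|lra].
    apply RInt_le_plus_scal; auto using ex_RInt_slice_gf_sum.
    { apply ex_RInt_slice_gf; lra. }
    intros x Hx. pose proof (slice_gf_opp_bounds t x Ht ltac:(lra)).
    pose proof (Hdist x ltac:(lra)) as Hx'. apply Rabs_le_between in Hx'. lra.
Qed.

Lemma ex_series_abel (I : nat -> R) t : (forall n, is_I n (I n)) -> 0 <= t < 1 ->
  ex_series (fun n => (-1) ^ n * I n / INR (fact n) * t ^ n).
Proof.
  intros HI Ht. set (s := (1 + t) / 2).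
  assert (Hs : 0 < s < 1) by (unfold s; lra).
  apply (ex_series_le (V:=R_CompleteNormedModule) _ (fun n => scal (gf_bound s) ((t / s) ^ n))).
  - intros n. change (norm ?u) with (Rabs u). change (scal ?u ?v) with (u * v).
    pose proof (is_I_le n (I n) s (HI n) Hs). pose proof (is_I_ge n (I n) (HI n)).
    pose proof (INR_fact_lt_0 n). pose proof (pow_lt s n ltac:(lra)). pose proof (pow_le t n ltac:(lra)).
    replace ((-1) ^ n * I n / INR (fact n) * t ^ n) with ((-1) ^ n * (I n / INR (fact n) * t ^ n))
      by (unfold Rdiv; ring).
    rewrite Rabs_mult, pow_1_abs, Rmult_1_l, Rabs_right.
    2:{ apply Rle_ge, Rmult_le_pos; [apply Rdiv_le_0_compat|]; lra. }
    replace ((t / s) ^ n) with (t ^ n / s ^ n)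
      by (unfold Rdiv; rewrite Rpow_mult_distr, pow_inv; reflexivity).
    apply Rmult_le_reg_r with (INR (fact n) * s ^ n); [apply Rmult_lt_0_compat; lra|].
    replace (I n / INR (fact n) * t ^ n * (INR (fact n) * s ^ n)) with (I n * s ^ n * t ^ n)
      by (field; lra).
    replace (gf_bound s * (t ^ n / s ^ n) * (INR (fact n) * s ^ n))
      with (INR (fact n) / s ^ n * gf_bound s * s ^ n * t ^ n) by (field; lra).
    apply Rmult_le_compat_r; [lra|]. apply Rmult_le_compat_r; lra.
  - apply (ex_series_scal_l (V:=R_CompleteNormedModule)), ex_series_geom.
    rewrite Rabs_right; [|apply Rle_ge, Rdiv_le_0_compat; lra].
    apply Rmult_lt_reg_r with s; [lra|]. unfold Rdiv. rewrite Rmult_assoc, Rinv_l; unfold s; lra.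
Qed.

Lemma Series_abel_bounds (I : nat -> R) t : (forall n, is_I n (I n)) -> 0 < t < 1 ->
  t / (t + 1) <= Series (fun n => (-1) ^ n * I n / INR (fact n) * t ^ n) <= 1 / (t * (t + 1)).
Proof.
  intros HI Ht. set (s := (1 + t) / 2).
  assert (Hs : 0 < s < 1) by (unfold s; lra).
  assert (Hcv := proj1 (is_series_Reals _ _) (Series_correct _ (ex_series_abel I t HI ltac:(lra)))).
  apply (Un_cv_between _ (fun N => (t / s) ^ S N * gf_bound s) _ _ _ Hcv).
  - apply Un_cv_pow_scal. split; [apply Rdiv_le_0_compat; lra|].
    apply Rmult_lt_reg_r with s; [lra|]. unfold Rdiv. rewrite Rmult_assoc, Rinv_l; unfold s; lra.
  - intros N. rewrite (sum_eq _ (fun n => (- t) ^ n * (I n / INR (fact n)))).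
    + exact (abel_partial_sum_bounds I t N HI Ht).
    + intros n _. replace (- t) with (-1 * t) by ring. rewrite Rpow_mult_distr. unfold Rdiv. ring.
Qed.

Lemma tends_to_half (S : R -> R) :
  (forall t, 0 < t < 1 -> t / (t + 1) <= S t <= 1 / (t * (t + 1))) ->
  forall eps, 0 < eps -> exists delta, 0 < delta /\
    forall t, 1 - delta < t < 1 -> Rabs (S t - 1 / 2) < eps.
Proof.
  intros HS eps Heps. exists (Rmin (1 / 2) (eps / 4)). split; [apply Rmin_pos; lra|].
  intros t Ht. pose proof (Rmin_l (1 / 2) (eps / 4)). pose proof (Rmin_r (1 / 2) (eps / 4)).
  destruct (HS t ltac:(lra)) as [Hlo Hhi].
  assert (Hpos : 0 < t * (t + 1)) by nra.
  assert (Hlo' : 1 / 2 - eps < t / (t + 1)).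
  { apply Rmult_lt_reg_r with (t + 1); [lra|].
    unfold Rdiv. rewrite Rmult_assoc, Rinv_l by lra. nra. }
  assert (Hhi' : 1 / (t * (t + 1)) < 1 / 2 + eps).
  { apply Rmult_lt_reg_r with (t * (t + 1)); [exact Hpos|].
    unfold Rdiv. rewrite Rmult_1_l, Rinv_l by lra. nra. }
  apply Rabs_def1; lra.
Qed.

Theorem corollary5 :
  (forall n : nat, exists L : R, is_I n L) /\
  (forall I : nat -> R, (forall n, is_I n (I n)) ->
     (~ exists l : R, infinite_sum (fun n => (-1) ^ n * I n / INR (Factorial.fact n)) l) /\
     (exists S : R -> R,
        (forall t, 0 <= t < 1 ->
           infinite_sum (fun n => (-1) ^ n * I n / INR (Factorial.fact n) * t ^ n) (S t)) /\
        (forall eps, 0 < eps -> exists delta, 0 < delta /\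
           forall t, 1 - delta < t < 1 -> Rabs (S t - 1 / 2) < eps))).
Proof.
  split; [exact is_I_exists|].
  intros I HI. split; [exact (is_I_not_summable I HI)|].
  exists (fun t => Series (fun n => (-1) ^ n * I n / INR (fact n) * t ^ n)). split.
  - intros t Ht. apply is_series_Reals, Series_correct, ex_series_abel; assumption.
  - apply tends_to_half. intros t Ht. apply Series_abel_bounds; assumption.
Qed.
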